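(* Let $\mathcal{L}\subseteq\mathbb{S}^n$ be a regular linear subspace and let $\{A_1,\dots,A_c\}$ be a basis of $\mathcal{L}^\perp$. Then, for generic $S\in\mathbb{S}^n$, the ML degree of $\mathcal{L}$ equals the number of invertible matrices $\sum_i t_iA_i+S$ such that $(t_1,\dots,t_c)$ is a critical point of the function $\ell(t_1,\dots,t_c):=\det(\sum_i t_iA_i+S)$.
   Context: $\mathbb{S}^n$ denotes the space of complex symmetric $n\times n$ matrices. A linear subspace $\mathcal{L}$ is regular if it contains a full-rank matrix. $\mathcal{L}^\perp=\{\Sigma:\mathrm{tr}(K\Sigma)=0\ \forall K\in\mathcal{L}\}$. The reciprocal variety $\mathcal{L}^{-1}$ is the Zariski closure of the set of inverses of invertible matrices in $\mathcal{L}$. The ML degree of $\mathcal{L}$ is the number of matrices in $\mathcal{L}^{-1}\cap(\mathcal{L}^\perp+S)$ for generic $S\in\mathbb{S}^n$. *)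

From HB Require Import structures.
From mathcomp Require Import all_boot all_algebra.
From mathcomp Require Import reals.
From mathcomp Require Import complex.
From mathcomp Require Import mpoly.

Set Implicit Arguments.
Unset Strict Implicit.
Unset Printing Implicit Defensive.

Import GRing.Theory.
Local Open Scope ring_scope.

Section MLdegree.
Variables (R : realType) (n : nat).
Local Notation C := (R[i]).
Local Notation Mat := ('M[C]_n).

Definition mat_eval (p : {mpoly C[n * n]}) (M : Mat) : C :=
  p.@[fun k => mxvec M 0 k].

Definition zariski_closure (X : Mat -> Prop) : Mat -> Prop :=
  fun M => forall p : {mpoly C[n * n]},
    (forall Y, X Y -> mat_eval p Y = 0) -> mat_eval p M = 0.

Definition symmetric (M : Mat) : Prop := M^T = M.

Definition sym_subspace (L : {vspace Mat}) : Prop :=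
  forall K, K \in L -> symmetric K.

Definition regular (L : {vspace Mat}) : Prop :=
  exists K, K \in L /\ K \in unitmx.

Definition in_perp (L : {vspace Mat}) (X : Mat) : Prop :=
  symmetric X /\ forall K, K \in L -> \tr (K *m X) = 0.

Definition reciprocal_variety (L : {vspace Mat}) : Mat -> Prop :=
  zariski_closure (fun M => exists K, [/\ K \in L, K \in unitmx & M = invmx K]).

Definition generic (P : Mat -> Prop) : Prop :=
  exists f : {mpoly C[n * n]},
    (exists S0, symmetric S0 /\ mat_eval f S0 != 0) /\
    forall S, symmetric S -> mat_eval f S != 0 -> P S.

Definition has_card (P : Mat -> Prop) (d : nat) : Prop :=
  exists s : seq Mat, [/\ uniq s, size s = d & forall M, M \in s <-> P M].

Definition ML_degree (L : {vspace Mat}) (d : nat) : Prop :=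
  generic (fun S => has_card
    (fun M => reciprocal_variety L M /\ in_perp L (M - S)) d).

Definition perp_basis (L : {vspace Mat}) (c : nat) (A : c.-tuple Mat) : Prop :=
  free A /\ forall X, X \in <<A>>%VS <-> in_perp L X.

Definition affine_combo (c : nat) (A : c.-tuple Mat) (S : Mat) (t : 'I_c -> C)
  : Mat := \sum_(k < c) t k *: tnth A k + S.

Definition ell (c : nat) (A : c.-tuple Mat) (S : Mat) : {mpoly C[c]} :=
  \det (\matrix_(i < n, j < n)
          (\sum_(k < c) 'X_k * ((tnth A k) i j)%:MP + (S i j)%:MP)).

Definition critical_point (c : nat) (A : c.-tuple Mat) (S : Mat)
  (t : 'I_c -> C) : Prop :=
  forall k : 'I_c, (mderiv k (ell A S)).@[t] = 0.

Definition critical_matrices (c : nat) (A : c.-tuple Mat) (S : Mat) :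
  Mat -> Prop :=
  fun M => M \in unitmx /\
    exists t, M = affine_combo A S t /\ critical_point A S t.

End MLdegree.

From Pilot Require Import Defs.
From HB Require Import structures.
From mathcomp Require Import all_boot all_algebra.
From mathcomp Require Import reals complex mpoly.
From mathcomp Require Import perm zify.
Import GRing.Theory Num.Theory.

Set Implicit Arguments.
Unset Strict Implicit.
Unset Printing Implicit Defensive.

(* For invertible [M], [M] lies in [L^-1 \cap (L^perp + S)] iff [M - S] is
   in the span of the [A_i] and [M^-1 \in L]; as [L = (L^perp)^perp] inside
   [S^n], the latter means [tr (A_i M^-1) = 0] for all [i], and by Jacobi's
   formula [d ell / d t_i = tr (A_i adj M) = det M * tr (A_i M^-1)].  So the
   theorem reduces to: for generic [S], all points of
   [L^-1 \cap (L^perp + S)] are invertible.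
   Let [B_1, ..., B_m] be a basis of [L].  On [L^-1], the [m + 1] functions
   [y_i(M) = tr (B_i M)] and [det M] depend on the [m] coordinates of
   [M^-1 \in L], so they satisfy a nonzero polynomial relation.  Dividing
   it by the largest power of [det M] it contains gives a polynomial in [y]
   and [det M] that vanishes on [L^-1] (a Zariski closure) and whose value
   at [det M = 0] is a nonzero polynomial [h(y)].  A singular [M] in [L^-1 \cap (L^perp + S)]
   has [y(M) = y(S)], hence [h(y(S)) = 0], which fails for generic [S]. *)

Lemma sum_digits_lt b k (f : nat -> nat) :
  (forall i, i < k -> f i < b) -> \sum_(i < k) f i * b ^ i < b ^ k.
Proof.
elim: k => [|k IHk] f_lt; first by rewrite big_ord0 expn0.
rewrite big_ord_recr /= expnS.
have := IHk (fun i lt_ik => f_lt i (ltnW lt_ik)); have := f_lt k (ltnSn k).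
move: (\sum_(i < k) _)%N (f k) (b ^ k) => s a x; nia.
Qed.

Lemma sum_digits_inj b k (f g : nat -> nat) :
    (forall i, i < k -> f i < b) -> (forall i, i < k -> g i < b) ->
    \sum_(i < k) f i * b ^ i = \sum_(i < k) g i * b ^ i ->
  forall i, i < k -> f i = g i.
Proof.
elim: k => [|k IHk] f_lt g_lt + i //.
have f_lt' i' (lt_ik : i' < k) := f_lt i' (ltnW lt_ik).
have g_lt' i' (lt_ik : i' < k) := g_lt i' (ltnW lt_ik).
have ltf := sum_digits_lt f_lt'; have ltg := sum_digits_lt g_lt'.
have bk_gt0 : 0 < b ^ k by move: ltf; case: (b ^ k).
rewrite !big_ord_recr /= => eq_sum.
have eq_k : f k = g k.
  have /= := congr1 (fun s => s %/ b ^ k)%N eq_sum.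
  by rewrite ![(\sum_(i < k) _ + _)%N]addnC !divnMDl // !divn_small ?addn0.
have eq_low : \sum_(i < k) f i * b ^ i = \sum_(i < k) g i * b ^ i.
  have /= := congr1 (fun s => s %% b ^ k)%N eq_sum.
  by rewrite ![(\sum_(i < k) _ + _)%N]addnC !modnMDl !modn_small.
move=> lt_ik1; have [-> // | lt_ik] : i = k \/ i < k by lia.
exact: IHk f_lt' g_lt' eq_low i lt_ik.
Qed.

Local Open Scope ring_scope.

(* [mpoly] also exports a predicate [symmetric]. *)
Local Notation symmetric := Defs.symmetric.
Local Notation constMx X := (map_mx (fun x => x%:MP) X).


Section Nonroot.
Variable F : numFieldType.

Lemma poly_nonroot (q : {poly F}) : q != 0 -> exists x, q.[x] != 0.
Proof.
move=> q_neq0; pose xs := [seq i%:R : F | i <- iota 0 (size q)].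
have uniq_xs : uniq xs by rewrite map_inj_uniq ?iota_uniq // => i j /eqP; rewrite eqr_nat => /eqP.
have [all_roots | /allPn[x _ qx_neq0]] := boolP (all (root q) xs); last by exists x.
by have := max_poly_roots q_neq0 all_roots uniq_xs; rewrite size_map size_iota ltnn.
Qed.

(* Kronecker substitution: with [b] above every exponent of [p], the monomials
   of [p] go to distinct powers of ['X] under [X_i |-> 'X ^+ b ^ i]. *)
Lemma mpoly_nonroot k (p : {mpoly F[k]}) : p != 0 -> exists v, p.@[v] != 0.
Proof.
move=> p_neq0; pose b := msize p.
pose enc (m : 'X_{1..k}) := (\sum_(i < k) m i * b ^ i)%N.
have exp_lt m : m \in msupp p -> forall i, (i < k -> nth 0 m i < b)%N.
  move=> /msize_mdeg_lt lt_mb i lt_ik; apply: leq_ltn_trans lt_mb.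
  have := mnm_tnth m (Ordinal lt_ik).
  by rewrite (tnth_nth 0) /= => <-; rewrite mdegE (bigD1 (Ordinal lt_ik)) ?leq_addr.
have enc_inj : {in msupp p &, injective enc}.
  move=> m1 m2 m1p m2p eq_enc; apply/mnmP => i.
  rewrite !mnm_tnth !(tnth_nth 0).
  apply: sum_digits_inj (exp_lt _ m1p) (exp_lt _ m2p) _ _ (ltn_ord i).
  by move: eq_enc; rewrite /enc; under eq_bigr do rewrite mnm_tnth (tnth_nth 0);
    under [in X in _ = X -> _]eq_bigr do rewrite mnm_tnth (tnth_nth 0).
pose q : {poly F} := \sum_(m <- msupp p) p@_m *: 'X^(enc m).
have q_neq0 : q != 0.
  have lead_supp := mlead_supp p_neq0.
  apply: contraNneq p_neq0 => /(congr1 (fun r : {poly F} => r`_(enc (mlead p)))).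
  rewrite coef0 /q coef_sum (bigD1_seq _ lead_supp (msupp_uniq p)) /=.
  rewrite coefZ coefXn eqxx mulr1 big1_seq ?addr0 => [/eqP|m /andP[ne_m mp]].
    by rewrite mcoeff_eq0 lead_supp.
  rewrite coefZ coefXn; case: eqP => [/esym/enc_inj eq_m|]; last by rewrite mulr0.
  by rewrite eq_m ?eqxx in ne_m.
have [x qx_neq0] := poly_nonroot q_neq0.
exists (fun i => x ^+ (b ^ i)); move: qx_neq0; rewrite mevalE /q horner_sum.
congr (_ != _); apply: eq_bigr => m _; rewrite hornerZ hornerXn -prodrXr.
by congr (_ * _); apply: eq_bigr => i _; rewrite -exprM mulnC.
Qed.

End Nonroot.

Section DegreeBounds.
Variables (F : idomainType) (k : nat).
Implicit Types p q : {mpoly F[k]}.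

Lemma msize_sum_leq I (r : seq I) (P : pred I) (f : I -> {mpoly F[k]}) s :
  (forall i, P i -> msize (f i) <= s)%N -> (msize (\sum_(i <- r | P i) f i) <= s)%N.
Proof.
move=> f_le; elim/big_ind: _ => [|p q p_le q_le|]; rewrite ?msize0 //.
by apply: leq_trans (msizeD_le _ _) _; rewrite geq_max p_le.
Qed.

Lemma msizeM_leq p q a b :
  (msize p <= a.+1)%N -> (msize q <= b.+1)%N -> (msize (p * q) <= (a + b).+1)%N.
Proof.
have [-> | p_neq0] := eqVneq p 0; first by rewrite mul0r msize0.
have [-> | q_neq0] := eqVneq q 0; first by rewrite mulr0 msize0.
rewrite msizeM // (mpolySpred _ p_neq0) (mpolySpred _ q_neq0) !ltnS addnS /=.
exact: leq_add.
Qed.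

Lemma msize_prod_leq I (r : seq I) (P : pred I) (f : I -> {mpoly F[k]}) (d : I -> nat) :
  (forall i, P i -> msize (f i) <= (d i).+1)%N ->
  (msize (\prod_(i <- r | P i) f i) <= (\sum_(i <- r | P i) d i).+1)%N.
Proof.
move=> f_le; elim/big_rec2: _ => [|i s p Pi p_le]; first by rewrite msize1.
exact: msizeM_leq (f_le i Pi) p_le.
Qed.

Lemma msizeX_leq p d e : (msize p <= d.+1)%N -> (msize (p ^+ e) <= (d * e).+1)%N.
Proof.
move=> p_le; have := @msize_prod_leq _ (index_enum 'I_e) xpredT _ _ (fun _ _ => p_le).
by rewrite prodr_const sum_nat_const card_ord mulnC.
Qed.

Lemma msize_sign e : (msize ((-1) ^+ e : {mpoly F[k]}) <= 1)%N.
Proof. by rewrite -signr_odd; case: (odd e); rewrite ?expr1 ?msizeN msize1. Qed.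

Lemma msize_det_leq m (Q : 'M[{mpoly F[k]}]_m) d :
  (forall i j, msize (Q i j) <= d.+1)%N -> (msize (\det Q) <= (d * m).+1)%N.
Proof.
move=> Q_le; apply: msize_sum_leq => s _.
rewrite -[(d * m)%N]add0n; apply: msizeM_leq.
  exact: msize_sign.
have := @msize_prod_leq _ (index_enum 'I_m) xpredT (fun i => Q i (s i)) (fun=> d)
  (fun i _ => Q_le i (s i)).
by rewrite sum_nat_const card_ord mulnC.
Qed.

End DegreeBounds.

Section Dependence.
Variables (F : fieldType) (k : nat).

Lemma mpoly_lin_dep (I : finType) (f : I -> {mpoly F[k]}) E :
    (E.+1 ^ k < #|I|)%N -> (forall i, msize (f i) <= E.+1)%N ->
  exists2 w : I -> F, exists i, w i != 0 & \sum_i w i *: f i = 0.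
Proof.
move=> card_lt f_le.
pose mono (mu : {ffun 'I_k -> 'I_E.+1}) : 'X_{1..k} := [multinom (mu i : nat) | i < k].
pose coefs : 'M[F]_(#|I|, #|{ffun 'I_k -> 'I_E.+1}|) :=
  \matrix_(x, y) (f (enum_val x))@_(mono (enum_val y)).
have ker_neq0 : kermx coefs != 0.
  rewrite kermx_eq0 /row_free neq_ltn (leq_ltn_trans (rank_leq_col _)) //.
  by rewrite card_ffun !card_ord.
have [r rowr_neq0] : exists r, row r (kermx coefs) != 0.
  have [r rowr | rows0] := pickP (fun r => row r (kermx coefs) != 0); first by exists r.
  by case/eqP: ker_neq0; apply/row_matrixP => r; rewrite row0; apply/eqP; exact: negbFE (rows0 r).
pose v := row r (kermx coefs).
have v_coefs : v *m coefs = 0 by rewrite -row_mul mulmx_ker row0.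
exists (fun i => v 0 (enum_rank i)).
  have [x vx_neq0 | v0] := pickP (fun x => v 0 x != 0).
    by exists (enum_val x); rewrite enum_valK.
  by case/eqP: rowr_neq0; apply/rowP => x; rewrite [RHS]mxE; apply/eqP; exact: negbFE (v0 x).
apply/mpolyP => mm; rewrite mcoeff0 raddf_sum /=.
have [mm_small | /forallPn[i lt_i]] := boolP [forall i, mm i <= E]%N; last first.
  rewrite big1 // => x _; rewrite mcoeffZ memN_msupp_eq0 ?mulr0 //.
  apply: msize_mdeg_ge; apply: leq_trans (f_le x) _; rewrite -ltnNge in lt_i.
  by apply: leq_trans lt_i _; rewrite mdegE (bigD1 i) ?leq_addr.
pose mu : {ffun 'I_k -> 'I_E.+1} := [ffun i => inord (mm i)].
have mono_mu : mono mu = mm.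
  by apply/mnmP => i; rewrite mnmE ffunE inordK // ltnS (forallP mm_small).
transitivity ((v *m coefs) 0 (enum_rank mu)); last by rewrite v_coefs mxE.
rewrite mxE (reindex _ (onW_bij _ (enum_val_bij _))) /=.
by apply: eq_bigr => x _; rewrite mcoeffZ enum_valK !mxE enum_rankK mono_mu.
Qed.

(* [T] is chosen so that the [(T + 1) ^ (k + 1)] products outnumber the
   [(d * (k + 1) * T + 1) ^ k] monomials that can occur in them. *)
Lemma mpoly_alg_dep (g : 'I_k -> {mpoly F[k]}) (h : {mpoly F[k]}) d :
    (forall i, msize (g i) <= d.+1)%N -> (msize h <= d.+1)%N ->
  exists T, exists2 w : {ffun 'I_k -> 'I_T.+1} * 'I_T.+1 -> F,
    exists e, w e != 0 & \sum_e w e *: (\prod_i g i ^+ e.1 i * h ^+ e.2) = 0.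
Proof.
move=> g_le h_le; have [T T_def] : {T | T = (d * k.+1 + 1) ^ k}%N by exists ((d * k.+1 + 1) ^ k)%N.
exists T.
apply: (@mpoly_lin_dep _ (fun e : {ffun 'I_k -> 'I_T.+1} * 'I_T.+1 =>
  \prod_i g i ^+ e.1 i * h ^+ e.2) (d * (k.+1 * T))%N) => [|e].
  rewrite card_prod card_ffun !card_ord -expnSr.
  have [k0 | k_gt0] := posnP k; first by rewrite T_def k0.
  have le_base : ((d * (k.+1 * T)).+1 <= (d * k.+1 + 1) * T.+1)%N.
    by rewrite mulnA; move: (d * k.+1)%N => a; nia.
  have lt_pow : (((d * k.+1 + 1) * T.+1) ^ k < T.+1 ^ k.+1)%N.
    by rewrite expnMn -T_def expnS ltn_pmul2r ?expn_gt0.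
  by apply: leq_ltn_trans lt_pow; rewrite leq_exp2r.
have prod_le : (msize (\prod_i g i ^+ e.1 i) <= (\sum_i d * e.1 i).+1)%N.
  by apply: msize_prod_leq => i _; exact: msizeX_leq.
apply: leq_trans (msizeM_leq prod_le (msizeX_leq e.2 h_le)) _.
rewrite ltnS -big_distrr -mulnDr leq_mul2l mulSnr; apply/orP; right.
apply: leq_add; last exact: (ltn_ord e.2).
apply: (@leq_trans (\sum_(i < k) T)); first by apply: leq_sum => i _; exact: (ltn_ord (e.1 i)).
by rewrite sum_nat_const card_ord.
Qed.

End Dependence.

Lemma mxtrace_map (R S : pzRingType) (f : {additive R -> S}) n (A : 'M[R]_n) :
  f (\tr A) = \tr (map_mx f A).
Proof. by rewrite raddf_sum; apply: eq_bigr => i _; rewrite mxE. Qed.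

Section TraceDuality.
Variables (F : fieldType) (n : nat).
Implicit Types K X Y : 'M[F]_n.

Definition dual_mx (f : 'M[F]_n -> F) : 'M[F]_n := \matrix_(i, j) f (delta_mx j i).

Lemma mxtrace_mul_dual (f : {scalar 'M[F]_n}) K : \tr (K *m dual_mx f) = f K.
Proof.
rewrite {2}[K]matrix_sum_delta linear_sum; apply: eq_bigr => i _.
rewrite mxE linear_sum; apply: eq_bigr => j _.
by rewrite linearZ mxE.
Qed.

Lemma trace_interp k (B : k.-tuple 'M[F]_n) (y : 'I_k -> F) :
  free B -> exists X, forall l, \tr (tnth B l *m X) = y l.
Proof.
move=> freeB; have coordB i j : coord B j (tnth B i) = (i == j)%:R.
  by rewrite (tnth_nth 0); exact: coord_free.
exists (\sum_j y j *: dual_mx (coord B j)) => l.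
rewrite mulmx_sumr raddf_sum /=.
under eq_bigr do rewrite -scalemxAr mxtraceZ mxtrace_mul_dual /= coordB.
rewrite (bigD1 l) //= eqxx mulr1 big1 ?addr0 // => j ne_jl.
by rewrite eq_sym (negbTE ne_jl) mulr0.
Qed.

Lemma trace_separation (L : {vspace 'M[F]_n}) Y : Y \notin L ->
  exists X, (forall K, K \in L -> \tr (K *m X) = 0) /\ \tr (Y *m X) = 1.
Proof.
move=> YnL; have basisL := vbasisP L; set B := vbasis L in basisL.
have freeYB : free [tuple of Y :: B].
  by rewrite free_cons (span_basis basisL) YnL (basis_free basisL).
exists (dual_mx (coord [tuple of Y :: B] ord0)); split => [K KL|]; rewrite mxtrace_mul_dual.
  rewrite (coord_vbasis KL) linear_sum big1 // => i _; rewrite linearZ /=.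
  by have /= -> := coord_free (lift ord0 i) ord0 freeYB; rewrite mulr0.
by have /= -> := coord_free ord0 ord0 freeYB.
Qed.

End TraceDuality.

Section SymmetricPart.
Variables (F : numFieldType) (n : nat).
Implicit Types K X : 'M[F]_n.

Definition sym_part X := 2^-1 *: (X + X^T).

Lemma sym_partT X : (sym_part X)^T = sym_part X.
Proof. by rewrite /sym_part linearZ linearD /= trmxK addrC. Qed.

Lemma mxtrace_mul_sym_part K X : K^T = K -> \tr (K *m sym_part X) = \tr (K *m X).
Proof.
move=> symK; have trKXT : \tr (K *m X^T) = \tr (K *m X).
  by rewrite -mxtrace_tr trmx_mul trmxK symK mxtrace_mulC.
rewrite /sym_part -scalemxAr mxtraceZ mulmxDr mxtraceD trKXT.
by rewrite [in RHS](splitr (\tr (K *m X))) mulrDr mulrC.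
Qed.

End SymmetricPart.

Section Jacobi.
Variables (F : comNzRingType) (c : nat).

Lemma mderivXU (k l : 'I_c) : mderiv k ('X_l : {mpoly F[c]}) = (l == k)%:R.
Proof.
rewrite mderivX mnm1E; case: eqP => [-> | _]; last by rewrite scale0r.
have -> : (U_(k) - U_(k))%MM = 0%MM by apply/mnmP => i; rewrite mnmBE subnn mnm0E.
by rewrite mpolyX0 scale1r.
Qed.

Lemma mderiv_prod (k : 'I_c) m (f : 'I_m -> {mpoly F[c]}) :
  mderiv k (\prod_(i < m) f i) =
  \sum_(a < m) \prod_(i < m) (if i == a then mderiv k (f i) else f i).
Proof.
elim: m f => [|m IHm] f; first by rewrite !big_ord0 -[1]/(1%:MP) mderivC.
have widen_neq (i : 'I_m) : (widen_ord (leqnSn m) i == ord_max) = false.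
  by rewrite -val_eqE /= ltn_eqF.
rewrite big_ord_recr /= mderivM IHm mulr_suml [RHS]big_ord_recr /=.
congr (_ + _).
  apply: eq_bigr => a _; rewrite [RHS]big_ord_recr /= eq_sym widen_neq.
  by congr (_ * _); apply: eq_bigr => i _.
rewrite [RHS]big_ord_recr /= eqxx; congr (_ * _).
by apply: eq_bigr => i _; rewrite widen_neq.
Qed.

Lemma mderiv_det (k : 'I_c) m (Q : 'M[{mpoly F[c]}]_m) :
  mderiv k (\det Q) = \tr (map_mx (mderiv k) Q *m \adj Q).
Proof.
pose Q_ a := \matrix_(i, j) if i == a then mderiv k (Q i j) else Q i j.
have detQ_ a : \det (Q_ a) = \sum_b mderiv k (Q a b) * cofactor Q a b.
  rewrite (expand_det_row _ a); apply: eq_bigr => b _; rewrite mxE eqxx; congr (_ * _).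
  rewrite /cofactor; congr (_ * \det _); apply/matrixP => i j.
  by rewrite !mxE eq_sym (negbTE (neq_lift a i)).
have dsign (b : bool) : mderiv k ((-1) ^+ b : {mpoly F[c]}) = 0.
  by case: b; rewrite ?expr1 ?expr0 ?mderivN -[1]/(1%:MP) mderivC ?oppr0.
transitivity (\sum_a \det (Q_ a)).
  rewrite /determinant raddf_sum /= exchange_big /=; apply: eq_bigr => s _.
  rewrite mderivM dsign mul0r add0r mderiv_prod mulr_sumr; apply: eq_bigr => a _.
  by congr (_ * _); apply: eq_bigr => i _; rewrite mxE.
apply: eq_bigr => a _; rewrite detQ_ mxE; apply: eq_bigr => b _.
by rewrite !mxE.
Qed.

End Jacobi.

Lemma map_mx_mpolyC (F : comNzRingType) k (v : 'I_k -> F) p q (X : 'M[F]_(p, q)) :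
  map_mx (meval v) (constMx X) = X.
Proof. by apply/matrixP => i j; rewrite !mxE mevalC. Qed.

Section GenericMatrix.
Variables (R : realType) (n : nat).
Local Notation C := R[i].
Local Notation Mat := 'M[C]_n.
Local Notation mpolyMx := 'M[{mpoly C[n * n]}]_n.

Definition Xmat : mpolyMx := vec_mx (\row_k 'X_k).

Lemma map_Xmat (v : 'I_(n * n) -> C) : map_mx (meval v) Xmat = vec_mx (\row_k v k).
Proof. by rewrite map_vec_mx; congr vec_mx; apply/rowP => k; rewrite !mxE mevalXU. Qed.

Lemma map_Xmat_mxvec (M : Mat) : map_mx (meval (fun k => mxvec M 0 k)) Xmat = M.
Proof. by rewrite map_Xmat -[RHS]mxvecK; congr vec_mx; apply/rowP => k; rewrite mxE. Qed.

Lemma mat_eval_det M : mat_eval (\det Xmat) M = \det M.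
Proof. by rewrite /mat_eval -det_map_mx map_Xmat_mxvec. Qed.

Lemma mat_eval_trace (X : Mat) (P : mpolyMx) M :
  mat_eval (\tr (constMx X *m P)) M =
  \tr (X *m map_mx (meval (fun k => mxvec M 0 k)) P).
Proof. by rewrite /mat_eval mxtrace_map map_mxM map_mx_mpolyC. Qed.

Definition trace_poly (X : Mat) : {mpoly C[n * n]} := \tr (constMx X *m Xmat).

Lemma mat_eval_trace_poly X M : mat_eval (trace_poly X) M = \tr (X *m M).
Proof. by rewrite mat_eval_trace map_Xmat_mxvec. Qed.

Definition sym_coords : (n * n).-tuple {mpoly C[n * n]} :=
  [tuple mxvec (Xmat + Xmat^T) 0 k | k < n * n].

Definition sym_mx (v : 'I_(n * n) -> C) : Mat :=
  vec_mx (\row_k v k) + (vec_mx (\row_k v k))^T.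

Lemma sym_mxT v : symmetric (sym_mx v).
Proof. by rewrite /Defs.symmetric linearD /= trmxK addrC. Qed.

Lemma meval_sym_coords f v : (f \mPo sym_coords).@[v] = mat_eval f (sym_mx v).
Proof.
rewrite comp_mpoly_meval; apply: meval_eq => k; rewrite tnth_mktuple.
by rewrite /sym_mx -map_Xmat map_trmx -map_mxD -map_mxvec mxE.
Qed.

Lemma sym_mx_halfK S : symmetric S -> sym_mx (fun k => mxvec (2^-1 *: S) 0 k) = S.
Proof.
move=> S_sym; rewrite /sym_mx; have -> : \row_k mxvec (2^-1 *: S) 0 k = mxvec (2^-1 *: S).
  by apply/rowP => k; rewrite mxE.
rewrite mxvecK linearZ /= S_sym -scalerDl [X in X *: _](_ : _ = 1) ?scale1r //.
by rewrite [RHS](splitr 1) mul1r.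
Qed.

Lemma comp_sym_coords_neq0 f S :
  symmetric S -> mat_eval f S != 0 -> f \mPo sym_coords != 0.
Proof.
move=> S_sym; apply: contraNneq => f0.
by rewrite -(sym_mx_halfK S_sym) -meval_sym_coords f0 meval0.
Qed.

Lemma generic_and (P Q : Mat -> Prop) :
  generic P -> generic Q -> generic (fun S => P S /\ Q S).
Proof.
move=> [f [[Sf [Sf_sym fSf]] fP]] [g [[Sg [Sg_sym gSg]] gQ]].
have [v fg_v] : exists v, ((f \mPo sym_coords) * (g \mPo sym_coords)).@[v] != 0.
  apply: mpoly_nonroot.
  exact: mulf_neq0 (comp_sym_coords_neq0 Sf_sym fSf) (comp_sym_coords_neq0 Sg_sym gSg).
exists (f * g); split.
  exists (sym_mx v); split; first exact: sym_mxT.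
  rewrite /mat_eval mevalM -/(mat_eval f _) -/(mat_eval g _).
  by rewrite -!meval_sym_coords -mevalM.
move=> S S_sym; rewrite /mat_eval mevalM mulf_eq0 negb_or => /andP[fS gS].
by split; [apply: fP | apply: gQ].
Qed.

End GenericMatrix.

Lemma adj_invmx (F : fieldType) n (A : 'M[F]_n) :
  A \in unitmx -> \adj A = \det A *: invmx A.
Proof.
by move=> Au; rewrite /invmx Au scalerA mulfV ?scale1r // -unitfE -unitmxE.
Qed.

Section Reciprocal.
Variables (R : realType) (n : nat).
Local Notation C := R[i].
Local Notation Mat := 'M[C]_n.
Implicit Types (L : {vspace Mat}) (M Y : Mat).

Lemma reciprocal_invmx L M :
  reciprocal_variety L M -> M \in unitmx -> invmx M \in L.
Proof.
move=> recM Mu; apply/negPn/negP => /trace_separation[X [XL XM]].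
pose p := \tr (constMx X *m \adj (Xmat R n)).
have p_eval N : mat_eval p N = \tr (X *m \adj N).
  by rewrite mat_eval_trace map_mx_adj map_Xmat_mxvec.
have : mat_eval p M = 0.
  apply: recM => _ [K [KL Ku ->]].
  by rewrite p_eval adj_invmx ?unitmx_inv // invmxK -scalemxAr mxtraceZ mxtrace_mulC XL ?mulr0.
rewrite p_eval adj_invmx // -scalemxAr mxtraceZ mxtrace_mulC XM mulr1.
by apply/eqP; rewrite -unitfE -unitmxE.
Qed.

Lemma mem_of_perp_basis L c (A : c.-tuple Mat) Y :
    sym_subspace L -> perp_basis L A -> symmetric Y ->
  (forall k, \tr (tnth A k *m Y) = 0) -> Y \in L.
Proof.
move=> L_sym [_ spanA] Y_sym AY; apply/negPn/negP => /trace_separation[X [XL XY]].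
have Xs_perp : in_perp L (sym_part X).
  by split=> [|K KL]; [exact: sym_partT | rewrite mxtrace_mul_sym_part ?XL ?L_sym].
have trY0 : \tr (Y *m sym_part X) = 0.
  have /coord_span -> := (spanA _).2 Xs_perp.
  rewrite mulmx_sumr raddf_sum big1 // => k _.
  by rewrite /= -scalemxAr mxtraceZ mxtrace_mulC -(tnth_nth 0) AY mulr0.
by move: XY; rewrite -mxtrace_mul_sym_part // trY0 => /eqP; rewrite eq_sym oner_eq0.
Qed.

End Reciprocal.

Section Critical.
Variables (R : realType) (n c : nat) (A : c.-tuple 'M[R[i]]_n) (S : 'M[R[i]]_n).
Local Notation C := R[i].
Local Notation Mat := 'M[C]_n.
Implicit Types (L : {vspace Mat}) (M : Mat).

Lemma ell_mderiv k t :
  (mderiv k (ell A S)).@[t] = \tr (tnth A k *m \adj (affine_combo A S t)).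
Proof.
rewrite /ell mderiv_det mxtrace_map map_mxM map_mx_adj; set P := \matrix_(i, j) _.
have dP : map_mx (mderiv k) P = constMx (tnth A k).
  apply/matrixP => i j; rewrite !mxE mderivD mderivC addr0 raddf_sum /=.
  rewrite (bigD1 k) //= big1 => [|l ne_lk]; rewrite mderivM mderivC mulr0 addr0 mderivXU.
    by rewrite eqxx mul1r addr0.
  by rewrite (negbTE ne_lk) mul0r.
have evalP : map_mx (meval t) P = affine_combo A S t.
  apply/matrixP => i j; rewrite !mxE mevalD mevalC raddf_sum summxE /=; congr (_ + _).
  by apply: eq_bigr => l _; rewrite mevalM mevalXU mevalC !mxE.
by rewrite dP evalP map_mx_mpolyC.
Qed.

Lemma critical_of_reciprocal L M :
    perp_basis L A -> reciprocal_variety L M -> in_perp L (M - S) -> M \in unitmx ->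
  critical_matrices A S M.
Proof.
move=> [_ spanA] recM perpMS Mu; split=> //; exists (fun k => coord A k (M - S)).
have MA : M = affine_combo A S (fun k => coord A k (M - S)).
  have MS : M - S = \sum_k coord A k (M - S) *: tnth A k.
    rewrite {1}(coord_span ((spanA _).2 perpMS)).
    by apply: eq_bigr => k _; rewrite (tnth_nth 0).
  by rewrite /affine_combo -MS subrK.
split=> // k; rewrite ell_mderiv -MA adj_invmx // -scalemxAr mxtraceZ mxtrace_mulC.
have [_ perpA] := (spanA _).1 (memv_span (mem_tnth k A)).
by rewrite perpA ?mulr0 ?reciprocal_invmx.
Qed.

Lemma reciprocal_of_critical L M :
    sym_subspace L -> perp_basis L A -> symmetric S -> critical_matrices A S M ->
  reciprocal_variety L M /\ in_perp L (M - S).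
Proof.
move=> L_sym [freeA spanA] S_sym [Mu [t [MA crit]]].
have perpMS : in_perp L (M - S).
  apply/(spanA _).1; rewrite MA /affine_combo addrK.
  by apply: rpred_sum => k _; apply/rpredZ/memv_span/mem_tnth.
split=> //; have detM_neq0 : \det M != 0 by rewrite -unitfE -unitmxE.
have M_sym : symmetric M by rewrite -(subrK S M) /Defs.symmetric linearD /= perpMS.1 S_sym.
have invM_L : invmx M \in L.
  apply: (mem_of_perp_basis L_sym (conj freeA spanA)) => [|k].
    by rewrite /Defs.symmetric trmx_inv M_sym.
  have /eqP := crit k; rewrite ell_mderiv -MA adj_invmx // -scalemxAr mxtraceZ.
  by rewrite mulf_eq0 (negbTE detM_neq0) => /eqP.
by move=> p p0; apply: p0; exists (invmx M); rewrite invM_L unitmx_inv invmxK.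
Qed.

End Critical.

Definition tdeg k T (e : {ffun 'I_k -> 'I_T.+1} * 'I_T.+1) : nat :=
  (\sum_i e.1 i + e.2)%N.

Section Nonsingular.
Variables (R : realType) (n : nat) (L : {vspace 'M[R[i]]_n}).
Hypothesis L_sym : sym_subspace L.
Local Notation C := R[i].
Local Notation m := (\dim L).
Local Notation B := (vbasis L).
Local Notation Exps T := ({ffun 'I_m -> 'I_T.+1} * 'I_T.+1)%type.

Definition coord_mx : 'M[{mpoly C[m]}]_n := \sum_j 'X_j *: constMx (tnth B j).

Lemma map_coord_mx u : map_mx (meval u) coord_mx = \sum_j u j *: tnth B j.
Proof.
apply/matrixP => a b; rewrite !mxE !summxE raddf_sum; apply: eq_bigr => j _.
by rewrite /= !mxE mevalM mevalXU mevalC.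
Qed.

Lemma msize_coord_mx a b : (msize (coord_mx a b) <= 2)%N.
Proof.
rewrite summxE; apply: msize_sum_leq => j _; rewrite !mxE.
by apply: (msizeM_leq (a := 1) (b := 0)); rewrite ?msizeX ?mdeg1 // msizeC leq_b1.
Qed.

Lemma msize_det_coord_mx : (msize (\det coord_mx) <= n.+1)%N.
Proof. by rewrite -[n in n.+1]mul1n; apply: msize_det_leq msize_coord_mx. Qed.

Lemma msize_trace_adj_coord_mx X :
  (msize (\tr (constMx X *m \adj coord_mx)) <= n.+1)%N.
Proof.
apply: msize_sum_leq => a _; rewrite mxE; apply: msize_sum_leq => b _.
rewrite !mxE; apply: leq_trans (msizeM_leq (a := 0) (b := 0 + 1 * n.-1) _ _) _.
- by rewrite msizeC leq_b1.
- apply: msizeM_leq; first exact: msize_sign.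
  by apply: msize_det_leq => i j; rewrite !mxE; exact: msize_coord_mx.
- by rewrite !add0n mul1n ltnS leq_pred.
Qed.

Definition inverse_relation T (w : Exps T -> C) : Prop :=
  forall K, K \in L -> K \in unitmx ->
    \sum_e w e * (\prod_i \tr (tnth B i *m invmx K) ^+ e.1 i * \det K ^+ tdeg e) = 0.

Lemma reciprocal_relation :
  exists T (w : Exps T -> C), (exists e, w e != 0) /\ inverse_relation w.
Proof.
have [T [w [e0 we0] rel]] :=
  mpoly_alg_dep (fun i => msize_trace_adj_coord_mx (tnth B i)) msize_det_coord_mx.
exists T, w; split=> [|K KL Ku]; first by exists e0.
pose u j := coord B j K.
have u_K : \sum_j u j *: tnth B j = K.
  by rewrite [RHS](coord_vbasis KL); apply: eq_bigr => j _; rewrite (tnth_nth 0).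
have detK_unit : \det K \is a GRing.unit by rewrite -unitmxE.
rewrite -[RHS](meval0 u) -rel raddf_sum; apply: eq_bigr => e _.
rewrite /= mevalZ mevalM rmorphXn -det_map_mx map_coord_mx u_K rmorph_prod /=.
congr (_ * _); rewrite /tdeg exprD mulrA; congr (_ * _).
rewrite -prodrXr -big_split; apply: eq_bigr => i _.
rewrite rmorphXn /= mxtrace_map map_mxM map_mx_mpolyC map_mx_adj map_coord_mx u_K.
by rewrite adj_invmx // -scalemxAr mxtraceZ exprMn mulrC.
Qed.


Section Relation.
Variables (T : nat) (w : Exps T -> C) (e0 : Exps T).
Hypothesis w_e0 : w e0 != 0.

Let etop := [arg max_(e > e0 | w e != 0%R) tdeg e]%N.
Let top := tdeg etop.

Lemma w_etop_neq0 : w etop != 0.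
Proof. by rewrite /etop; case: arg_maxnP. Qed.

Lemma tdeg_le_top e : w e != 0 -> (tdeg e <= top)%N.
Proof. by rewrite /top /etop; case: arg_maxnP => // e' _ e'_max /e'_max. Qed.

(* [inverse_relation w] at [K = invmx M], divided by [\det K ^+ top]. *)
Definition rel_poly : {mpoly C[n * n]} := \sum_e
  w e *: (\prod_i trace_poly (tnth B i) ^+ e.1 i * \det (Xmat R n) ^+ (top - tdeg e)).

Definition rel_top_poly : {mpoly C[n * n]} :=
  \sum_(e | tdeg e == top) w e *: \prod_i trace_poly (tnth B i) ^+ e.1 i.

Lemma mat_eval_rel_poly M : mat_eval rel_poly M =
  \sum_e w e * (\prod_i \tr (tnth B i *m M) ^+ e.1 i * \det M ^+ (top - tdeg e)).
Proof.
rewrite /mat_eval raddf_sum; apply: eq_bigr => e _.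
rewrite /= mevalZ mevalM rmorph_prod rmorphXn /= -/(mat_eval _ M) mat_eval_det.
congr (_ * (_ * _)); apply: eq_bigr => i _.
by rewrite rmorphXn /= -/(mat_eval _ M) mat_eval_trace_poly.
Qed.

Lemma mat_eval_rel_top_poly M : mat_eval rel_top_poly M =
  \sum_(e | tdeg e == top) w e * \prod_i \tr (tnth B i *m M) ^+ e.1 i.
Proof.
rewrite /mat_eval raddf_sum; apply: eq_bigr => e _.
rewrite /= mevalZ rmorph_prod /=; congr (_ * _); apply: eq_bigr => i _.
by rewrite rmorphXn /= -/(mat_eval _ M) mat_eval_trace_poly.
Qed.

Lemma rel_poly_reciprocal M :
  inverse_relation w -> reciprocal_variety L M -> mat_eval rel_poly M = 0.
Proof.
move=> w_rel recM; apply: recM => _ [K [KL Ku ->]]; rewrite mat_eval_rel_poly.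
have detK_z : \det K * \det (invmx K) = 1.
  by rewrite det_inv mulfV // -unitfE -unitmxE.
rewrite -[RHS](mulr0 (\det (invmx K) ^+ top)) -[in RHS](w_rel K KL Ku) mulr_sumr.
apply: eq_bigr => e _; have [-> | we] := eqVneq (w e) 0; first by rewrite !mul0r mulr0.
have zE : \det (invmx K) ^+ (top - tdeg e) = \det (invmx K) ^+ top * \det K ^+ tdeg e.
  rewrite -[in RHS](subnK (tdeg_le_top we)) exprD -mulrA -exprMn.
  by rewrite (mulrC (\det (invmx K))) detK_z expr1n mulr1.
by rewrite zE [RHS]mulrCA; congr (_ * _); exact: mulrCA.
Qed.

Lemma rel_poly_singular M :
  \det M = 0 -> mat_eval rel_poly M = mat_eval rel_top_poly M.
Proof.
move=> detM0; rewrite mat_eval_rel_poly mat_eval_rel_top_poly detM0 [RHS]big_mkcond /=.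
apply: eq_bigr => e _; have [-> | we] := eqVneq (w e) 0; first by rewrite !mul0r; case: ifP.
rewrite expr0n subn_eq0 eqn_leq tdeg_le_top //=.
by case: (top <= tdeg e)%N; rewrite ?mulr1 ?mulr0.
Qed.

Lemma rel_top_poly_perp M S :
  in_perp L (M - S) -> mat_eval rel_top_poly M = mat_eval rel_top_poly S.
Proof.
move=> [_ perpMS]; rewrite !mat_eval_rel_top_poly; apply: eq_bigr => e _.
congr (_ * _); apply: eq_bigr => i _; congr (_ ^+ _); apply/eqP.
by rewrite -subr_eq0 -linearB /= -mulmxBr perpMS ?vbasis_mem ?mem_tnth.
Qed.

Lemma rel_top_poly_sym_nonzero :
  exists S0, symmetric S0 /\ mat_eval rel_top_poly S0 != 0.
Proof.
pose mono (a : {ffun 'I_m -> 'I_T.+1}) : 'X_{1..m} := [multinom (a i : nat) | i < m].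
pose q : {mpoly C[m]} := \sum_(e | tdeg e == top) w e *: 'X_[mono e.1].
have q_neq0 : q != 0.
  apply/eqP => /(congr1 (mcoeff (mono etop.1))); rewrite mcoeff0 raddf_sum /=.
  rewrite (bigD1 etop) //= mcoeffZ mcoeffX eqxx mulr1 big1 ?addr0 => [|e /andP[top_e ne_e]].
    by apply/eqP; exact: w_etop_neq0.
  rewrite mcoeffZ mcoeffX; case: eqP => [eq_mono|]; last by rewrite mulr0.
  have e1 : e.1 = etop.1.
    apply/ffunP => i; apply/val_inj.
    by have := congr1 (fun mm : 'X_{1..m} => mm i) eq_mono; rewrite !mnmE.
  have e2 : e.2 = etop.2.
    by apply/val_inj/eqP; move: top_e; rewrite /top /tdeg e1 eqn_add2l.
  by move: ne_e; rewrite [e]surjective_pairing e1 e2 -surjective_pairing eqxx.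
have [y0 q_y0] := mpoly_nonroot q_neq0.
have [X trX] := trace_interp y0 (basis_free (vbasisP L)).
exists (sym_part X); split; first exact: sym_partT.
suff -> : mat_eval rel_top_poly (sym_part X) = q.@[y0] by [].
rewrite mat_eval_rel_top_poly raddf_sum; apply: eq_bigr => e _.
rewrite /= mevalZ mevalX; congr (_ * _); apply: eq_bigr => i _.
by rewrite mnmE mxtrace_mul_sym_part ?trX //; exact: L_sym (vbasis_mem (mem_tnth i B)).
Qed.

End Relation.

Theorem generic_invertible : generic (fun S =>
  forall M, reciprocal_variety L M -> in_perp L (M - S) -> M \in unitmx).
Proof.
have [T [w [[e0 we0] w_rel]]] := reciprocal_relation.
have [S0 [S0_sym top_S0]] := rel_top_poly_sym_nonzero we0.
exists (rel_top_poly w e0); split; first by exists S0.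
move=> S _ top_S M recM perpMS; apply: contraLR top_S => Mnu.
have detM0 : \det M = 0 by apply/eqP; move: Mnu; rewrite unitmxE unitfE negbK.
rewrite negbK -(rel_top_poly_perp w e0 perpMS) -(rel_poly_singular we0 detM0).
by rewrite (rel_poly_reciprocal we0 w_rel recM).
Qed.

End Nonsingular.

Theorem proposition2p8 (R : realType) (n c : nat)
  (L : {vspace 'M[R[i]]_n}) (A : c.-tuple 'M[R[i]]_n) :
  sym_subspace L -> regular L -> perp_basis L A ->
  forall d : nat, ML_degree L d ->
  generic (fun S : 'M[R[i]]_n => has_card (critical_matrices A S) d).
Proof.
move=> L_sym _ A_basis d ML_d.
have [f [f_nz fP]] := generic_and ML_d (generic_invertible L_sym).
exists f; split=> // S S_sym fS.
have [[s [s_uniq s_size s_ML]] S_inv] := fP S S_sym fS.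
exists s; split=> // M; rewrite s_ML; split=> [[recM perpMS] | critM].
  exact: critical_of_reciprocal A_basis recM perpMS (S_inv M recM perpMS).
exact: reciprocal_of_critical L_sym A_basis S_sym critM.
Qed.
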